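(* Let $\Sigma$ be a theory and let $A,B \subseteq \mathcal{T}_Y$ be finite. Then $B \subseteq A_\Sigma^{\omega}$ if and only if $\Sigma \vdash A \Rightarrow B$.
   Context: $Y$ is a non-empty finite set of attributes and $\mathcal{T}_Y = \{y^i \mid y \in Y, i \in \mathbb{Z}\}$; $M + j = \{y^{i+j} \mid y^i \in M\}$. A formula is $A \Rightarrow B$ with $A,B$ finite subsets of $\mathcal{T}_Y$; a theory is a set of formulas. Syntactic closure: for $M \subseteq \mathcal{T}_Y$, $M_\Sigma^0 = M$, $M_\Sigma^{n+1} = M_\Sigma^n \cup \bigcup\{F+i \mid E \Rightarrow F \in \Sigma, i \in \mathbb{Z}, E+i \subseteq M_\Sigma^n\}$, and $M_\Sigma^\omega = \bigcup_{n=0}^\infty M_\Sigma^n$. Deduction rules (for arbitrary finite $A,B,C,D \subseteq \mathcal{T}_Y$, $i \in \mathbb{Z}$): (Ax) infer $A \cup B \Rightarrow A$; (Cut) from $A \Rightarrow B$ and $B \cup C \Rightarrow D$ infer $A \cup C \Rightarrow D$; (Shf) from $A \Rightarrow B$ infer $A+i \Rightarrow B+i$. A proof of $A \Rightarrow B$ by $\Sigma$ is a finite sequence of formulas ending with $A \Rightarrow B$ in which each member is in $\Sigma$ or is the conclusion of a rule whose hypotheses occur earlier; $\Sigma \vdash A \Rightarrow B$ means such a proof exists. *)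

From HB Require Import structures.
From mathcomp Require Import all_boot all_order all_algebra.
From mathcomp Require Import finmap.
Set Implicit Arguments. Unset Strict Implicit. Unset Printing Implicit Defensive.
Local Open Scope fset_scope.

(* Y : nonempty finite set of attributes (a finType with an inhabitant).
   Temporal attributes y^i are pairs (y, i) with i : int. *)
Definition tattr (Y : finType) := (Y * int)%type.

Definition formula (Y : finType) := ({fset tattr Y} * {fset tattr Y})%type.

Definition theory (Y : finType) := formula Y -> Prop.

Definition fshift (Y : finType) (M : {fset tattr Y}) (j : int) : {fset tattr Y} :=
  [fset (x.1, (x.2 + j)%R) | x in M].

Definition pshift (Y : finType) (M : tattr Y -> Prop) (j : int) : tattr Y -> Prop :=
  fun t => exists2 x, M x & t = (x.1, (x.2 + j)%R).

Fixpoint closure_n (Y : finType) (Sigma : theory Y) (M : tattr Y -> Prop) (n : nat)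
  : tattr Y -> Prop :=
  match n with
  | 0 => M
  | n'.+1 => fun t =>
      closure_n Sigma M n' t \/
      exists (E F : {fset tattr Y}) (i : int),
        [/\ Sigma (E, F),
            (forall e, e \in fshift E i -> closure_n Sigma M n' e)
          & t \in fshift F i]
  end.

Definition closure_omega (Y : finType) (Sigma : theory Y) (M : tattr Y -> Prop)
  : tattr Y -> Prop :=
  fun t => exists n, closure_n Sigma M n t.

Definition rule_Ax (Y : finType) (phi : formula Y) : Prop :=
  exists A B : {fset tattr Y}, phi = (A `|` B, A).

Definition rule_Cut (Y : finType) (h1 h2 phi : formula Y) : Prop :=
  exists A B C D : {fset tattr Y},
    [/\ h1 = (A, B), h2 = (B `|` C, D) & phi = (A `|` C, D)].

Definition rule_Shf (Y : finType) (h phi : formula Y) : Prop :=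
  exists (A B : {fset tattr Y}) (i : int),
    h = (A, B) /\ phi = (fshift A i, fshift B i).

Definition is_proof (Y : finType) (Sigma : theory Y) (s : seq (formula Y)) : Prop :=
  forall k, k < size s ->
    let phi := nth (fset0, fset0) s k in
    [\/ Sigma phi,
        rule_Ax phi,
        (exists j1 j2, [/\ j1 < k, j2 < k &
            rule_Cut (nth (fset0, fset0) s j1) (nth (fset0, fset0) s j2) phi])
      | (exists j, j < k /\ rule_Shf (nth (fset0, fset0) s j) phi)].

Definition provable (Y : finType) (Sigma : theory Y) (phi : formula Y) : Prop :=
  exists s : seq (formula Y), is_proof Sigma s /\ s <> [::] /\ last (fset0, fset0) s = phi.

(** Proof sequences are equivalent to derivation trees, which makes both
    directions inductions.  Soundness: a derivable [A => B] transfers, at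
    every shift, from [A] to [B] inside any set closed under the formulas of
    [Sigma]; [A_Sigma^omega] is such a set and contains [A].  Completeness:
    by induction on [n], every [t] in [A_Sigma^n] satisfies
    [Sigma |- A => {t}]; the inductive step applies a formula [E => F] of
    [Sigma] at a shift [i] through Shf, after collecting the hypotheses
    [E + i] into one conclusion of [A] with the derived union rule. *)

From mathcomp Require Import all_boot all_order all_algebra.
From mathcomp Require Import finmap.
Set Implicit Arguments. Unset Strict Implicit. Unset Printing Implicit Defensive.
Local Open Scope fset_scope.

Lemma chain_bound (T : eqType) (P : nat -> T -> Prop) :
    (forall n m t, n <= m -> P n t -> P m t) ->
  forall s : seq T, (forall t, t \in s -> exists n, P n t) ->
  exists n, forall t, t \in s -> P n t.
Proof.
move=> Pmono; elim=> [|x s IHs] Ps; first by exists 0.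
have [n Pnx] := Ps x (mem_head x s).
have [m Pms] : exists m, forall t, t \in s -> P m t.
  by apply: IHs => t ts; apply: Ps; rewrite inE ts orbT.
exists (maxn n m) => t; rewrite inE => /predU1P[->|ts].
  exact: Pmono (leq_maxl n m) Pnx.
exact: Pmono (leq_maxr n m) (Pms t ts).
Qed.

Section Shift.
Variable Y : finType.
Implicit Types (X Z : {fset tattr Y}) (t : tattr Y).

Lemma fshiftP X j t :
  reflect (exists2 x, x \in X & t = (x.1, (x.2 + j)%R)) (t \in fshift X j).
Proof.
apply: (iffP idP) => [/imfsetP[x Xx ->]|[x Xx ->]]; first by exists x.
by apply/imfsetP; exists x.
Qed.

Lemma fshift0 X : fshift X 0 = X.
Proof.
apply/fsetP => t; apply/fshiftP/idP => [[x Xx ->]|Xt].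
  by rewrite GRing.addr0 -surjective_pairing.
by exists t; rewrite ?GRing.addr0 -?surjective_pairing.
Qed.

Lemma fshiftU X Z j : fshift (X `|` Z) j = fshift X j `|` fshift Z j.
Proof. exact: imfsetU. Qed.

Lemma fshiftD X j i : fshift (fshift X j) i = fshift X (j + i)%R.
Proof.
apply/fsetP => t; apply/fshiftP/fshiftP => [[_ /fshiftP[x Xx ->] ->]|[x Xx ->]].
  by exists x; rewrite //= GRing.addrA.
by exists (x.1, (x.2 + j)%R); [apply/fshiftP; exists x | rewrite /= GRing.addrA].
Qed.

End Shift.

Section Derivations.
Variables (Y : finType) (Sigma : theory Y).
Notation T := (tattr Y).
Notation fm := (formula Y).
Notation nth0 := (nth (fset0, fset0)).
Implicit Types (A B C D E F X Z : {fset T}) (phi : fm) (s : seq fm).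

Definition derivable_from (hyps : seq fm) phi :=
  [\/ Sigma phi, rule_Ax phi,
      exists h1 h2, [/\ h1 \in hyps, h2 \in hyps & rule_Cut h1 h2 phi]
    | exists2 h, h \in hyps & rule_Shf h phi].

Lemma derivable_from_sub hyps hyps' phi : {subset hyps <= hyps'} ->
  derivable_from hyps phi -> derivable_from hyps' phi.
Proof.
move=> sub [?|?|[h1 [h2 [? ? ?]]]|[h ? ?]].
- exact: Or41.
- exact: Or42.
- by apply: Or43; exists h1, h2; split; rewrite ?sub.
- by apply: Or44; exists h; rewrite ?sub.
Qed.

Lemma mem_take_nth s k h : k <= size s ->
  reflect (exists2 j, j < k & nth0 s j = h) (h \in take k s).
Proof.
move=> le_ks; have size_ks := size_takel le_ks.
by apply: (iffP (nthP (fset0, fset0))); rewrite size_ks => -[j jk <-];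
  exists j; rewrite // nth_take.
Qed.

Lemma is_proofE s : is_proof Sigma s <->
  forall k, k < size s -> derivable_from (take k s) (nth0 s k).
Proof.
suff step k : k < size s -> (let phi := nth0 s k in
    [\/ Sigma phi, rule_Ax phi,
        (exists j1 j2, [/\ j1 < k, j2 < k &
            rule_Cut (nth0 s j1) (nth0 s j2) phi])
      | (exists j, j < k /\ rule_Shf (nth0 s j) phi)])
    <-> derivable_from (take k s) (nth0 s k).
  by split=> Ps k ks; apply/(step k ks); apply: Ps.
move=> /ltnW/mem_take_nth memP /=.
split=> [[?|?|[j1 [j2 [j1k j2k cut]]]|[j [jk shf]]]|[?|?|[h1 [h2 []]]|[h]]].
- exact: Or41.
- exact: Or42.
- by apply: Or43; exists (nth0 s j1), (nth0 s j2); split=> //; apply/memP; [exists j1|exists j2].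
- by apply: Or44; exists (nth0 s j) => //; apply/memP; exists j.
- exact: Or41.
- exact: Or42.
- by move=> /memP[j1 j1k <-] /memP[j2 j2k <-] cut; apply: Or43; exists j1, j2.
- by move=> /memP[j jk <-] shf; apply: Or44; exists j.
Qed.

Lemma is_proof_rcons s phi :
  is_proof Sigma (rcons s phi) <-> is_proof Sigma s /\ derivable_from s phi.
Proof.
have take_rcons k : k <= size s -> take k (rcons s phi) = take k s.
  by move=> le_ks; rewrite -cats1 take_cat ltn_neqAle le_ks andbT;
     case: eqP => [->|//]; rewrite subnn take0 cats0 take_size.
rewrite !is_proofE size_rcons; split=> [Ps|[Ps Pphi] k].
  split=> [k ks|].
    by have := Ps k (ltnW ks); rewrite take_rcons ?nth_rcons ?ks // ltnW.
  by have := Ps _ (ltnSn (size s)); rewrite take_rcons // take_size nth_rcons ltnn eqxx.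
rewrite ltnS leq_eqVlt => /predU1P[->|ks].
  by rewrite take_rcons // take_size nth_rcons ltnn eqxx.
by rewrite take_rcons ?nth_rcons ?ks ?(ltnW ks) //; apply: Ps.
Qed.

Lemma is_proof_cat s1 s2 : is_proof Sigma s1 -> is_proof Sigma s2 ->
  is_proof Sigma (s1 ++ s2).
Proof.
move=> Ps1; elim/last_ind: s2 => [|s2 phi IHs2]; first by rewrite cats0.
rewrite -rcons_cat !is_proof_rcons => -[/IHs2 Ps12 Pphi]; split=> //.
by apply: derivable_from_sub Pphi => h; rewrite mem_cat orbC => ->.
Qed.

Lemma provableP phi : provable Sigma phi <-> exists2 s, is_proof Sigma s & phi \in s.
Proof.
split=> [[s [Ps [s_nil <-]]]|[s]].
  by exists s => //; case: s s_nil {Ps} => // x s _; rewrite /= mem_last.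
elim/last_ind: s => [//|s x IHs] Psx.
rewrite mem_rcons inE => /predU1P[->|phis]; last by apply: IHs; case/is_proof_rcons: Psx.
by exists (rcons s x); rewrite last_rcons; split=> //; case: s {IHs Psx}.
Qed.

Inductive derives : fm -> Prop :=
  | derives_axiom phi : Sigma phi -> derives phi
  | derives_Ax A B : derives (A `|` B, A)
  | derives_Cut A B C D : derives (A, B) -> derives (B `|` C, D) -> derives (A `|` C, D)
  | derives_Shf A B i : derives (A, B) -> derives (fshift A i, fshift B i).

Lemma derivable_from_derives hyps phi : (forall h, h \in hyps -> derives h) ->
  derivable_from hyps phi -> derives phi.
Proof.
move=> Dhyps [?|[A [B ->]]|[h1 [h2 [h1s h2s [A [B [C [D [E1 E2 ->]]]]]]]]|[h hs]].
- exact: derives_axiom.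
- exact: derives_Ax.
- by apply: (derives_Cut (B := B)); [rewrite -E1 | rewrite -E2]; apply: Dhyps.
- by move=> [A [B [i [E ->]]]]; apply: derives_Shf; rewrite -E; apply: Dhyps.
Qed.

Lemma is_proof_derives s : is_proof Sigma s -> forall phi, phi \in s -> derives phi.
Proof.
elim/last_ind: s => [//|s x IHs] /is_proof_rcons[/IHs Ds Px] phi.
rewrite mem_rcons inE => /predU1P[->|]; last exact: Ds.
exact: derivable_from_derives Px.
Qed.

Lemma derives_is_proof phi : derives phi -> exists2 s, is_proof Sigma s & phi \in s.
Proof.
have single psi : derivable_from [::] psi -> exists2 s, is_proof Sigma s & psi \in s.
  by move=> Ppsi; exists [:: psi]; rewrite ?mem_head // -[[:: psi]]/(rcons [::] psi)
     is_proof_rcons.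
elim=> {phi} [phi ?|A B|A B C D _ [s1 Ps1 s1AB] _ [s2 Ps2 s2BCD]|A B i _ [s Ps sAB]].
- exact/single/Or41.
- by apply/single/Or42; exists A, B.
- exists (rcons (s1 ++ s2) (A `|` C, D)); rewrite ?mem_rcons ?mem_head //.
  apply/is_proof_rcons; split; first exact: is_proof_cat.
  by apply: Or43; exists (A, B), (B `|` C, D); rewrite !mem_cat s1AB s2BCD orbT;
     split => //; exists A, B, C, D.
- exists (rcons s (fshift A i, fshift B i)); rewrite ?mem_rcons ?mem_head //.
  by apply/is_proof_rcons; split=> //; apply: Or44; exists (A, B) => //; exists A, B, i.
Qed.

Lemma provable_derives phi : provable Sigma phi <-> derives phi.
Proof.
rewrite provableP; split=> [[s Ps phis]|/derives_is_proof//].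
exact: is_proof_derives Ps _ phis.
Qed.

Lemma derives_sub X Z : Z `<=` X -> derives (X, Z).
Proof. by move=> /fsetUidPr {1}<-; apply: derives_Ax. Qed.

Lemma derives_trans A B D : derives (A, B) -> derives (B, D) -> derives (A, D).
Proof. by move=> DAB DBD; rewrite -[A]fsetU0; apply: derives_Cut DAB _; rewrite fsetU0. Qed.

Lemma derives_weakl E E' D : E `<=` E' -> derives (E, D) -> derives (E', D).
Proof. by move=> /derives_sub; apply: derives_trans. Qed.

Lemma derives_weakr A X Z : Z `<=` X -> derives (A, X) -> derives (A, Z).
Proof. by move=> /derives_sub DXZ DAX; apply: derives_trans DAX DXZ. Qed.

Lemma derives_cut_sub A B E D : derives (A, B) -> derives (E, D) ->
  E `<=` B `|` A -> derives (A, D).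
Proof.
move=> DAB /derives_weakl DED /DED DBAD.
by rewrite -[A]fsetUid; apply: derives_Cut DAB DBAD.
Qed.

Lemma derives_union A X Z : derives (A, X) -> derives (A, Z) -> derives (A, X `|` Z).
Proof.
move=> DAX /(derives_weakl (fsubsetUr X A)) DXAZ.
apply: derives_cut_sub DAX _ (fsubset_refl _).
apply: derives_cut_sub DXAZ (derives_sub (fsubset_refl (X `|` Z))) _.
by rewrite fsubUset fsubsetUl andbT fsubsetU // fsubsetUl orbT.
Qed.

Lemma derives_fset A X : (forall t, t \in X -> derives (A, [fset t])) -> derives (A, X).
Proof.
elim/fset1U_rect: X => [_|x X _ IHX DX]; first by apply: derives_sub; apply: fsub0set.
apply: derives_union; first by apply: DX; rewrite fsetU11.
by apply: IHX => t Xt; apply: DX; rewrite in_fsetU Xt orbT.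
Qed.

Definition sigma_closed (M : T -> Prop) := forall E F i, Sigma (E, F) ->
  (forall e, e \in fshift E i -> M e) -> forall f, f \in fshift F i -> M f.

Definition valid_in (M : T -> Prop) (phi : fm) := forall i,
  (forall a, a \in fshift phi.1 i -> M a) -> forall b, b \in fshift phi.2 i -> M b.

Lemma derives_sound M phi : sigma_closed M -> derives phi -> valid_in M phi.
Proof.
move=> closedM; elim=> {phi} [[E F] SEF|A B|A B C D _ VAB _ VBCD|A B j _ VAB] i /=.
- exact: closedM.
- by move=> MAB b Ab; apply: MAB; rewrite fshiftU in_fsetU Ab.
- move=> MAC; have MB : forall b, b \in fshift B i -> M b.
    by apply: VAB => a Aa; apply: MAC; rewrite fshiftU in_fsetU Aa.
  apply: VBCD => c; rewrite /= fshiftU in_fsetU => /orP[/MB //|Cc].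
  by apply: MAC; rewrite fshiftU in_fsetU Cc orbT.
- by rewrite !fshiftD; apply: VAB.
Qed.

Lemma closure_n_mono M n m t : n <= m -> closure_n Sigma M n t -> closure_n Sigma M m t.
Proof.
elim: m => [|m IHm]; first by rewrite leqn0 => /eqP->.
by rewrite leq_eqVlt ltnS => /predU1P[->//|/IHm Mn /Mn]; left.
Qed.

Lemma closure_omega_closed M : sigma_closed (closure_omega Sigma M).
Proof.
move=> E F i SEF ME f Ff.
have [n Mn] := chain_bound (@closure_n_mono M) ME.
by exists n.+1; right; exists E, F, i.
Qed.

Lemma closure_n_derives A n t :
  closure_n Sigma (fun x => x \in A) n t -> derives (A, [fset t]).
Proof.
elim: n t => [|n IHn] t /=; first by move=> At; apply: derives_sub; rewrite fsub1set.
case=> [/IHn //|[E [F [i [SEF ME Ft]]]]].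
have DAE : derives (A, fshift E i) by apply: derives_fset => e /ME /IHn.
have DAF := derives_trans DAE (derives_Shf i (derives_axiom SEF)).
by apply: derives_weakr DAF; rewrite fsub1set.
Qed.

End Derivations.

Theorem lemma4 (Y : finType) (y0 : Y) (Sigma : theory Y)
    (A B : {fset tattr Y}) :
  (forall t, t \in B -> closure_omega Sigma (fun x => x \in A) t)
  <-> provable Sigma (A, B).
Proof.
rewrite provable_derives; split=> [BA|DAB t Bt].
  by apply: derives_fset => t /BA [n]; apply: closure_n_derives.
have valid := derives_sound (@closure_omega_closed _ Sigma (fun x => x \in A)) DAB.
apply: (valid 0%R); rewrite /= fshift0 // => a Aa.
by exists 0.
Qed.
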